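(* Let $G$ be a simple graph on at least $4$ vertices and let $x,y$ be two distinct vertices of $G$. Suppose that (1) $G+xy$ is $2$-connected; (2) $N_2(G)\setminus\{x,y\}$ is an independent set of $G$; and (3) $G$ contains no cycle of length $4$. Then $G$ contains two $(x,y)$-paths $P_1,P_2$ with $|P_1|\not\equiv |P_2|\pmod 3$.
   Context: $G+xy$ denotes the graph obtained from $G$ by adding the edge $xy$ (if not already present). $N_2(G)$ denotes the set of vertices of degree exactly $2$ in $G$. An $(x,y)$-path is a path with end-vertices $x$ and $y$; $|P|$ is its number of edges. A graph is $2$-connected if it has at least $3$ vertices and deleting any single vertex leaves it connected. *)

From mathcomp Require Import all_boot.
Set Implicit Arguments. Unset Strict Implicit. Unset Printing Implicit Defensive.

Section Graphs.
Variable T : finType.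

Definition simple_graph (e : rel T) : Prop := irreflexive e /\ symmetric e.

Definition add_edge (e : rel T) (x y : T) : rel T :=
  fun u v => [|| e u v, (u == x) && (v == y) | (u == y) && (v == x)].

Definition connected_in (e : rel T) (S : {set T}) : Prop :=
  forall u w, u \in S -> w \in S ->
    exists p : seq T, [&& path e u p, last u p == w & all (mem S) p].

Definition two_connected (e : rel T) : Prop :=
  2 < #|T| /\ forall v : T, connected_in e [set~ v].

Definition deg (e : rel T) (u : T) : nat := #|[set v | e u v]|.

Definition N2 (e : rel T) : {set T} := [set u | deg e u == 2].

Definition independent (e : rel T) (S : {set T}) : Prop :=
  forall u v, u \in S -> v \in S -> ~~ e u v.

Definition has_C4 (e : rel T) : Prop :=
  exists a b c d : T, uniq [:: a; b; c; d] /\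
    [&& e a b, e b c, e c d & e d a].

(* an (x,y)-path: x :: p is a path with distinct vertices ending at y;
   its number of edges is size p *)
Definition xy_path (e : rel T) (x y : T) (p : seq T) : Prop :=
  [&& path e x p, last x p == y & uniq (x :: p)].

End Graphs.

From mathcomp Require Import all_boot zify.
From Stdlib Require Import Classical.
Set Implicit Arguments. Unset Strict Implicit. Unset Printing Implicit Defensive.

(* Suppose all (x,y)-paths have the same length mod 3, and let P = v_0 ... v_n
   be a longest one.  Call an ear of P a path between two vertices v_a, v_b of P
   whose inner vertices avoid P.  Replacing the segment v_a ... v_b of P by an
   ear gives an (x,y)-path, so an ear is shorter than the segment it bypasses
   and agrees with it in length mod 3; rerouting along two disjoint crossing
   ears v_a -> v_b and v_c -> v_d (a < c < b < d) likewise forces b = c mod 3.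
   Ears exist, by 2-connectivity of G + xy and because inner vertices of degree
   2 are never consecutive on P.  Take an ear v_i -> v_j with j - i minimal: it
   has j - i >= 3 as there is no 4-cycle, and every inner v_l (i < l < j) of
   degree other than 2 starts an ear, disjoint from it by minimality, that lands
   beyond v_j (so l = j mod 3) or before v_i (so l = i mod 3); two such ears
   from l1 < l2 leaving in opposite directions cross, whence l1 = l2 mod 3.
   Thus inner vertices congruent to neither i nor j have degree 2, and a case
   analysis on j - i mod 3 contradicts the independence of degree-2 vertices. *)

Lemma ex_minn_prop (P : nat -> Prop) :
  (exists n, P n) -> exists n, P n /\ forall m, P m -> n <= m.
Proof.
move=> [n Pn]; elim: n {-2}n (leqnn n) Pn => [|b IH] n le_nb Pn.
  by exists n; split=> // m _; move: le_nb; rewrite leqn0 => /eqP ->.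
have [[m [Pm lt_mn]]|no_smaller] := classic (exists m, P m /\ m < n).
  by apply: (IH m) => //; lia.
exists n; split=> // m Pm; rewrite leqNgt; apply/negP => lt_mn.
by apply: no_smaller; exists m.
Qed.

Lemma ex_maxn_prop (P : nat -> Prop) (ub : nat) :
  (exists n, P n) -> (forall n, P n -> n <= ub) ->
  exists n, P n /\ forall m, P m -> m <= n.
Proof.
move=> [n Pn] le_ub.
have [k [Pk min_k]] : exists k, P (ub - k) /\ forall m, P (ub - m) -> k <= m.
  by apply: ex_minn_prop; exists (ub - n); rewrite subKn ?le_ub.
exists (ub - k); split=> // m Pm.
have := min_k (ub - m); rewrite subKn ?le_ub // => /(_ Pm).
by have := le_ub m Pm; lia.
Qed.

Definition distn (a b : nat) := (a - b) + (b - a).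

Lemma uniq_cat_gap (I J : seq nat) m :
  uniq I -> uniq J -> all (gtn m) I -> all (leq m) J -> uniq (I ++ J).
Proof.
move=> I_uniq J_uniq /allP I_lt /allP J_ge; rewrite cat_uniq I_uniq J_uniq andbT.
by apply/hasPn => t /J_ge; apply: contraL => /I_lt; rewrite /= -ltnNge.
Qed.

Lemma uniq_iota_down_iota a b c d n : a < c -> c <= b -> b < d ->
  uniq (iota 0 a.+1 ++ (b :: map (subn b) (iota 1 (b - c))) ++ iota d n).
Proof.
move=> lt_ac le_cb lt_bd; apply: (uniq_cat_gap (m := a.+1)); first exact: iota_uniq.
- apply: (uniq_cat_gap (m := b.+1)); last 2 first.
  + by apply/allP => t; rewrite inE => /orP[/eqP -> | /mapP[u _ ->]] /=; lia.
  + by apply/allP => t; rewrite mem_iota /=; lia.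
  + rewrite cons_uniq map_inj_in_uniq ?iota_uniq ?andbT => [|s t]; last first.
      by rewrite !mem_iota; lia.
    by apply/mapP => -[u]; rewrite mem_iota; lia.
  + exact: iota_uniq.
- by apply/allP => t; rewrite mem_iota /=; lia.
- apply/allP => t; rewrite mem_cat inE mem_iota => /orP[/orP[/eqP -> | /mapP[u + ->]] | ] /=.
  + lia.
  + by rewrite mem_iota; lia.
  + lia.
Qed.

Section SeqFacts.
Variable T : eqType.
Implicit Types (e : rel T) (s r : seq T).

Lemma path_rcons_rev e a s b : symmetric e ->
  path e a (rcons s b) -> path e b (rcons (rev s) a).
Proof.
move=> e_sym; have := rev_path e a (rcons s b).
rewrite last_rcons belast_rcons rev_cons => ->.
by rewrite (@eq_path _ _ e) // => u w; rewrite /= e_sym.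
Qed.

Lemma uniq_interleave (A : pred T) s1 s2 s3 r1 r2 :
  uniq (s1 ++ s2 ++ s3) -> uniq (r1 ++ r2) ->
  all A (s1 ++ s2 ++ s3) -> ~~ has A (r1 ++ r2) ->
  uniq (s1 ++ r1 ++ s2 ++ r2 ++ s3).
Proof.
move=> s_uniq r_uniq s_A r_nA.
have /perm_uniq -> : perm_eq (s1 ++ r1 ++ s2 ++ r2 ++ s3) ((s1 ++ s2 ++ s3) ++ r1 ++ r2).
  by apply/permP => z; rewrite !count_cat; lia.
rewrite cat_uniq s_uniq r_uniq /=.
by rewrite andbT; apply/hasPn => z /(hasPn r_nA); apply: contra => /(allP s_A).
Qed.

Definition seg (f : nat -> T) i n := map f (iota i n).

Lemma size_seg f i n : size (seg f i n) = n.
Proof. by rewrite size_map size_iota. Qed.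

Lemma seg_path e f i n :
  (forall t, i <= t < i + n -> e (f t) (f t.+1)) -> path e (f i) (seg f i.+1 n).
Proof.
elim: n i => [//|n IH] i f_e /=.
rewrite f_e ?leqnn ?addnS ?ltnS ?leq_addr //=.
by apply: IH => t t_in; apply: f_e; lia.
Qed.

Lemma last_seg f i n : last (f i) (seg f i.+1 n) = f (i + n).
Proof. by elim: n i => [|n IH] i; rewrite ?addn0 //= IH addSnnS. Qed.

End SeqFacts.

Section GraphFacts.
Variables (T : finType) (e : rel T).

Lemma deg_neq2_third u a b :
  e u a -> e u b -> a != b -> deg e u != 2 -> exists w, [/\ e u w, w != a & w != b].
Proof.
move=> ua ub neq_ab deg_u.
have [w /and3P[uw wa wb] | none] := pickP [pred w | [&& e u w, w != a & w != b]].
  by exists w.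
move/eqP: deg_u; case; rewrite /deg (_ : [set w | e u w] = [set a; b]) ?cards2 ?neq_ab //.
apply/setP => w; rewrite !inE; apply/idP/orP => [uw | [] /eqP -> //].
by move: (none w); rewrite /= uw /= => /negbT; rewrite negb_and !negbK => /orP.
Qed.

Variables x y : T.

Lemma add_edge_off a b : add_edge e x y a b ->
  (a \notin [:: x; y]) || (b \notin [:: x; y]) -> e a b.
Proof.
by case/or3P=> [// | |] /andP[/eqP-> /eqP->]; rewrite !inE !eqxx ?orbT.
Qed.

Lemma path_add_edge_avoid c z s : c \in [:: x; y] -> c \notin z :: s ->
  path (add_edge e x y) z s -> path e z s.
Proof.
move=> c_xy c_zs; apply: (sub_in_path (P := predC1 c)); last first.
  by apply/allP => w w_zs /=; apply: contraNneq c_zs => <-.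
move=> a b /= a_c b_c /or3P[// | |] /andP[/eqP ea /eqP eb]; move: c_xy;
  by rewrite !inE -ea -eb !(eq_sym c) (negbTE a_c) (negbTE b_c).
Qed.

End GraphFacts.

Section LongestPath.
Variables (T : finType) (e : rel T) (x y : T) (p0 : seq T).
Hypothesis e_sym : symmetric e.
Hypothesis p0_xy : xy_path e x y p0.
Hypothesis p0_longest : forall p, xy_path e x y p -> size p <= size p0.
Hypothesis p0_mod3 : forall p, xy_path e x y p -> size p = size p0 %[mod 3].

Local Notation P := (x :: p0).
Local Notation N := (size p0).+1.
Local Notation v := (nth x P).

Lemma P_uniq : uniq P.
Proof. by case/and3P: p0_xy. Qed.

Lemma v_last : v N.-1 = y.
Proof. by rewrite nth_last; case/and3P: p0_xy => _ /eqP. Qed.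

Lemma v_edge t : t.+1 < N -> e (v t) (v t.+1).
Proof. by case/and3P: p0_xy => /(pathP x) + _ _; apply. Qed.

Lemma v_eq i j : i < N -> j < N -> (v i == v j) = (i == j).
Proof. by move=> lt_iN lt_jN; rewrite nth_uniq ?P_uniq. Qed.

Lemma v_inj i j : i < N -> j < N -> v i = v j -> i = j.
Proof. by move=> lt_iN lt_jN /eqP; rewrite v_eq // => /eqP. Qed.

Lemma mem_v t : t < N -> v t \in P.
Proof. exact: (@mem_nth _ x P). Qed.

Lemma uniq_map_v I : uniq I -> all (gtn N) I -> uniq (map v I).
Proof.
by move=> I_uniq /allP I_lt; rewrite map_inj_in_uniq // => i j /I_lt + /I_lt; apply: v_inj.
Qed.

Lemma all_map_v I : all (gtn N) I -> all (mem P) (map v I).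
Proof. by rewrite all_map => /allP I_lt; apply/allP => t /I_lt; apply: mem_v. Qed.

Lemma xy_path_size p : xy_path e x y p -> size p < N /\ size p = N.-1 %[mod 3].
Proof. by move=> p_xy; split; [rewrite ltnS p0_longest | rewrite p0_mod3]. Qed.

(* The last field excludes the edges of P themselves. *)
Record ear (a b : nat) (r : seq T) : Prop := Ear {
  ear_ltN_l : a < N;
  ear_ltN_r : b < N;
  ear_neq : a != b;
  ear_path : path e (v a) (rcons r (v b));
  ear_uniq : uniq r;
  ear_off : ~~ has (mem P) r;
  ear_proper : (0 < size r) || (1 < distn a b) }.

Lemma ear_rev a b r : ear a b r -> ear b a (rev r).
Proof.
case=> lt_aN lt_bN neq_ab r_path r_uniq r_off r_proper; split=> //.
- by rewrite eq_sym.
- exact: path_rcons_rev.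
- by rewrite rev_uniq.
- by rewrite has_rev.
- by rewrite size_rev /distn addnC.
Qed.

Lemma ear_size a b r : ear a b r -> a < b ->
  size r < b - a /\ (size r).+1 = b - a %[mod 3].
Proof.
case=> _ lt_bN _ r_path r_uniq r_off _ lt_ab.
pose p := seg v 1 a ++ r ++ v b :: seg v b.+1 (N - b.+1).
have /xy_path_size : xy_path e x y p.
  apply/and3P; split.
  - rewrite cat_path last_seg -cat_rcons cat_path r_path last_rcons.
    by rewrite !seg_path // => t t_lt; apply: v_edge; lia.
  - by rewrite /p !(last_cat, last_cons) last_seg -v_last; apply/eqP; congr nth; lia.
  - rewrite -[x :: p]/(seg v 0 a.+1 ++ r ++ [::] ++ [::] ++ seg v b (N - b.+1).+1).
    have I_lt : all (gtn N) (iota 0 a.+1 ++ iota b (N - b.+1).+1).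
      by apply/allP => t; rewrite mem_cat !mem_iota /=; lia.
    apply: (uniq_interleave (A := mem P)); rewrite ?cats0 ?cat0s // -map_cat.
    + apply: uniq_map_v I_lt; apply: (uniq_cat_gap (m := a.+1)); rewrite ?iota_uniq //.
        by apply/allP => t; rewrite mem_iota /=; lia.
      by apply/allP => t; rewrite mem_iota /=; lia.
    + exact: all_map_v.
rewrite !size_cat /= !size_seg; lia.
Qed.

(* Follow P to v a, the first ear to v b, P backwards to v c, the second ear
   to v d, and P on to y. *)
Lemma cross_detour_xy_path a b c d r1 r2 : ear a b r1 -> ear c d r2 ->
  a < c -> c < b -> b < d -> ~~ has (mem r1) r2 ->
  xy_path e x y (seg v 1 a ++ r1 ++ v b :: seg (fun t => v (b - t)) 1 (b - c) ++
                 r2 ++ v d :: seg v d.+1 (N - d.+1)).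
Proof.
move=> ear1 ear2 lt_ac lt_cb lt_bd r12.
have [lt_dN r1_path r2_path] := And3 (ear_ltN_r ear2) (ear_path ear1) (ear_path ear2).
set vdown := fun t => v (b - t).
have vdown0 : vdown 0 = v b by rewrite /vdown subn0.
have vdown_c : vdown (0 + (b - c)) = v c by rewrite /vdown add0n subKn // ltnW.
have vdown_edge t : 0 <= t < 0 + (b - c) -> e (vdown t) (vdown t.+1).
  by move=> t_lt; rewrite e_sym /vdown (_ : b - t = (b - t.+1).+1); [apply: v_edge | ]; lia.
apply/and3P; split.
- rewrite cat_path last_seg -cat_rcons cat_path r1_path last_rcons.
  rewrite cat_path -vdown0 (seg_path vdown_edge) last_seg vdown_c.
  rewrite -cat_rcons cat_path r2_path last_rcons.
  by rewrite !seg_path // => t t_lt; apply: v_edge; lia.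
- by rewrite !(last_cat, last_cons) last_seg -v_last; apply/eqP; congr nth; lia.
pose I := iota 0 a.+1 ++ (b :: map (subn b) (iota 1 (b - c))) ++ iota d (N - d.+1).+1.
have I_lt : all (gtn N) I.
  apply/allP => t; rewrite !mem_cat inE !mem_iota.
  by case/or3P=> [| /orP[/eqP -> | /mapP[u _ ->]] |] /=; lia.
have segs_I : seg v 0 a.+1 ++ (v b :: seg vdown 1 (b - c)) ++ seg v d (N - d.+1).+1 = map v I.
  by rewrite !map_cat /= -map_comp.
rewrite -[x :: _]/(seg v 0 a.+1 ++ r1 ++ (v b :: seg vdown 1 (b - c)) ++ r2 ++
                  seg v d (N - d.+1).+1).
apply: (uniq_interleave (A := mem P)); rewrite ?segs_I.
- by apply: uniq_map_v I_lt; apply: uniq_iota_down_iota => //; apply: ltnW.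
- rewrite cat_uniq (ear_uniq ear1) (ear_uniq ear2) andbT.
  by apply: contra r12 => /hasP[z z2 z1]; apply/hasP; exists z.
- exact: all_map_v.
- by rewrite has_cat negb_or (ear_off ear1) (ear_off ear2).
Qed.

Lemma crossing_ears_mod3 a b c d r1 r2 : ear a b r1 -> ear c d r2 ->
  a < c -> c < b -> b < d -> ~~ has (mem r1) r2 -> (b = c %[mod 3]).
Proof.
move=> ear1 ear2 lt_ac lt_cb lt_bd r12.
have [lt_cross mod_cross] := xy_path_size (cross_detour_xy_path ear1 ear2 lt_ac lt_cb lt_bd r12).
have [lt1 mod1] := ear_size ear1 (ltn_trans lt_ac lt_cb).
have [lt2 mod2] := ear_size ear2 (ltn_trans lt_cb lt_bd).
have lt_dN := ear_ltN_r ear2.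
move: lt_cross mod_cross; rewrite !size_cat /= !size_cat /= !size_seg; lia.
Qed.

Lemma ear_join a m1 r1 c m2 r2 : ear a m1 r1 -> ear c m2 r2 -> a != c ->
  has (mem r2) r1 -> exists r, ear a c r.
Proof.
move=> [lt_aN _ _ path1 uniq1 off1 _] [lt_cN _ _ path2 uniq2 off2 _] neq_ac has_r12.
move: path1 uniq1 off1; case: (split_find has_r12) => u s1 s2 u_r2 s1_r2.
move: path2 uniq2 off2 s1_r2; case: (path.splitP (u_r2 : u \in r2)) => t1 t2.
move=> path2 uniq2 off2 s1_r2 path1 uniq1 off1.
exists (s1 ++ rev (rcons t1 u)); split=> //.
- rewrite rev_rcons -cat_rcons rcons_cat cat_path last_rcons.
  move: path1 path2; rewrite !rcons_cat !cat_path !last_rcons => /andP[-> _] /andP[+ _].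
  exact: path_rcons_rev.
- rewrite cat_uniq rev_uniq has_rev.
  move: uniq1 uniq2; rewrite !cat_uniq rcons_uniq => /and3P[/andP[_ ->] _ _] /and3P[-> _ _].
  rewrite /= andbT; apply/hasPn => z z_t1; apply: contra s1_r2 => z_s1.
  by apply/hasP; exists z => //=; rewrite mem_cat z_t1.
- rewrite has_cat has_rev negb_or; apply/andP; split.
    by apply: contra off1; rewrite has_cat has_rcons => ->; rewrite orbT.
  by apply: contra off2; rewrite has_cat => ->.
- by rewrite size_cat size_rev size_rcons addnS.
Qed.

Hypothesis e_irr : irreflexive e.
Hypothesis x_neq_y : x != y.
Hypothesis G2c : two_connected (add_edge e x y).

Lemma mem_y : y \in P.
Proof. by rewrite -v_last mem_v. Qed.

Lemma notin_xy z : z \notin P -> z \notin [:: x; y].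
Proof.
move=> zNP; rewrite !inE negb_or; apply/andP.
by split; apply: contraNneq zNP => ->; rewrite ?mem_head ?mem_y.
Qed.

Lemma ear_of_off_neighbor l w : l < N -> e (v l) w -> w \notin P ->
  exists m r, ear l m r.
Proof.
move=> lt_lN e_lw wNP.
(* A walk from w to an end t != v l of P avoiding v l first meets P at some u. *)
pose t := if v l == x then y else x.
have tP : t \in P by rewrite /t; case: ifP => _; [exact: mem_y | exact: mem_head].
have t_neq : t != v l by rewrite /t; case: ifPn => [/eqP-> | ]; rewrite eq_sym.
have w_neq : w != v l by apply: contraNneq wNP => ->; apply: mem_v.
have [q /and3P[q_path /eqP q_last q_avoid]] := G2c.2 (v l) w t
  ltac:(by rewrite !inE) ltac:(by rewrite !inE).
case: (shortenP q_path) q_last => q' q'_path q'_uniq q'_sub q'_last.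
have has_P : has (mem P) q'.
  have := mem_last w q'; rewrite q'_last inE => /orP[/eqP t_w | t_q'].
    by move: wNP; rewrite -t_w tP.
  by apply/hasP; exists t.
move: q'_path q'_uniq q'_sub; case: (split_find has_P) => u s1 s2 uP s1_off.
rewrite cat_path rcons_path => /andP[/andP[s1_path s1_u] _] ws_uniq s_q.
have ws_off : ~~ has (mem P) (w :: s1) by rewrite /= negb_or wNP.
exists (index u P), (w :: s1); split => //.
- by rewrite index_mem.
- have u_q : u \in q by apply: s_q; rewrite mem_cat mem_rcons mem_head.
  have u_neq : u != v l by move: (allP q_avoid u u_q); rewrite !inE.
  by apply: contra u_neq => /eqP ->; rewrite nth_index.
- have lastNxy : last w s1 \notin [:: x; y].
    by apply: notin_xy; apply: (hasPn ws_off); apply: mem_last.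
  rewrite nth_index // rcons_cons /= e_lw rcons_path (add_edge_off s1_u) ?lastNxy // andbT.
  apply: (path_add_edge_avoid (c := x)) s1_path; first exact: mem_head.
  by apply: contra ws_off => x_ws; apply/hasP; exists x; last exact: mem_head.
- by move: ws_uniq; rewrite cat_rcons -cat_cons cat_uniq => /andP[].
Qed.

Lemma ear_of_neighbor l w : l < N -> e (v l) w -> w != v l.-1 -> w != v l.+1 ->
  exists m r, ear l m r.
Proof.
move=> lt_lN e_lw w_prev w_next.
have [wP | wNP] := boolP (w \in P); last exact: (ear_of_off_neighbor lt_lN e_lw wNP).
have vk : v (index w P) = w := nth_index x wP.
have k_l : index w P != l by apply: contraTneq e_lw => <-; rewrite vk e_irr.
have k_prev : index w P != l.-1 by apply: contraNneq w_prev => <-; rewrite vk.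
have k_next : index w P != l.+1 by apply: contraNneq w_next => <-; rewrite vk.
exists (index w P), [::]; split => //.
- by rewrite index_mem.
- by rewrite eq_sym.
- by rewrite /= vk e_lw.
- by apply/orP; right; rewrite /distn; lia.
Qed.

Lemma inner_ear l : 0 < l -> l.+1 < N -> deg e (v l) != 2 -> exists m r, ear l m r.
Proof.
move=> l_gt0 lt_l1N deg_l.
have prev_l : e (v l) (v l.-1) by rewrite e_sym -{2}(prednK l_gt0) v_edge // prednK // ltnW.
have neq_prev_next : v l.-1 != v l.+1 by apply/eqP => /v_inj; lia.
have [w [e_lw w_prev w_next]] := deg_neq2_third prev_l (v_edge lt_l1N) neq_prev_next deg_l.
exact: (ear_of_neighbor (ltnW lt_l1N) e_lw).
Qed.

Lemma exit_edge z : z \notin P -> exists l w, [/\ l < N, w \notin P & e (v l) w].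
Proof.
move=> zNP.
have z_neq_y : z != y by apply: contraNneq zNP => ->; apply: mem_y.
have [q /and3P[q_path /eqP q_last _]] := G2c.2 y x z
  ltac:(by rewrite !inE) ltac:(by rewrite !inE).
have has_off : has [predC P] q.
  have := mem_last x q; rewrite q_last inE => /orP[/eqP zx | zq].
    by move: zNP; rewrite zx mem_head.
  by apply/hasP; exists z.
move: q_path; case: (split_find has_off) => u s1 s2 uNP s1P.
rewrite cat_path rcons_path => /andP[/andP[_ e_s1u] _].
have s1uP : last x s1 \in P.
  have := mem_last x s1; rewrite inE => /orP[/eqP-> | ]; first exact: mem_head.
  by move=> ls1; have := hasPn s1P _ ls1; rewrite /= negbK.
exists (index (last x s1) P), u; split => //; first by rewrite index_mem.
by rewrite nth_index //; apply: (add_edge_off e_s1u); apply/orP; right; apply: notin_xy.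
Qed.

Hypothesis N2_indep : independent e (N2 e :\: [set x; y]).

Lemma inner_deg2_succ l : 0 < l -> l.+2 < N -> deg e (v l) = 2 -> deg e (v l.+1) != 2.
Proof.
move=> l_gt0 lt_l2N deg_l; apply/eqP => deg_l1.
have inner t : 0 < t -> t.+1 < N -> deg e (v t) = 2 -> v t \in N2 e :\: [set x; y].
  move=> t_gt0 lt_t1N deg_t; rewrite !inE deg_t eqxx andbT negb_or -[x]/(v 0) -v_last.
  by apply/andP; split; apply/eqP => /v_inj; lia.
have := N2_indep (inner l l_gt0 (ltnW lt_l2N) deg_l) (inner l.+1 isT lt_l2N deg_l1).
by rewrite v_edge // ltnW.
Qed.

Hypothesis card_T : 4 <= #|T|.

Lemma exists_ear : exists a b r, ear a b r.
Proof.
have [le4N | ltN4] := leqP 4 N.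
  have [deg1 | deg1] := eqVneq (deg e (v 1)) 2.
    have [m [r ear_2]] := inner_ear (l := 2) isT le4N (inner_deg2_succ (l := 1) isT le4N deg1).
    by exists 2, m, r.
  have [m [r ear_1]] := inner_ear (l := 1) isT (ltnW le4N) deg1.
  by exists 1, m, r.
have [z zNP] : exists z, z \notin P.
  case: (pickP [predC P]) => [z zNP | all_P]; first by exists z.
  move: card_T; rewrite leqNgt => /negP[]; apply: leq_ltn_trans ltN4.
  apply: leq_trans (card_size P); apply/subset_leq_card/subsetP => z _.
  exact/negbFE/all_P.
have [l [w [lt_lN wNP e_lw]]] := exit_edge zNP.
have [m [r ear_l]] := ear_of_off_neighbor lt_lN e_lw wNP.
by exists l, m, r.
Qed.

Lemma exists_min_ear : exists i j rq,
  [/\ ear i j rq, i < j & forall a b r, ear a b r -> j - i <= distn a b].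
Proof.
pose spanned s := exists a b r, ear a b r /\ distn a b = s.
have [|s [[i [j [rq [ear_ij <-]]]] s_min]] := @ex_minn_prop spanned.
  by have [a [b [r ear_ab]]] := exists_ear; exists (distn a b), a, b, r.
have min_ij a' b' r' : ear a' b' r' -> distn i j <= distn a' b'.
  by move=> ear'; apply: s_min; exists a', b', r'.
have [lt_ij | lt_ji | eq_ij] := ltngtP i j.
- by exists i, j, rq; split=> // a' b' r' /min_ij; rewrite /distn; lia.
- exists j, i, (rev rq); split; first exact: ear_rev.
  + by [].
  + by move=> a' b' r' /min_ij; rewrite /distn; lia.
- by move: (ear_neq ear_ij); rewrite eq_ij eqxx.
Qed.

Hypothesis noC4 : ~ has_C4 e.

Section MinimalEar.
Variables (i j : nat) (rq : seq T).
Hypothesis ear_ij : ear i j rq.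
Hypothesis lt_ij : i < j.
Hypothesis ij_min : forall a b r, ear a b r -> j - i <= distn a b.

Lemma min_ear_span : 2 < j - i.
Proof.
have [lt_size mod_size] := ear_size ear_ij lt_ij.
have [span2 | ] := eqVneq (j - i) 2; last by have := ear_proper ear_ij; rewrite /distn; lia.
have lt_jN := ear_ltN_r ear_ij; have j_eq : j = i.+2 by lia.
have size1 : size rq = 1 by lia.
move: ear_ij size1; clear lt_size mod_size; case: rq => [|q []] // [_ _ _ /= e_iqj _ qNP _] _.
move: e_iqj qNP; rewrite /= j_eq orbF => /and3P[e_iq e_qj _] qNP.
have qv t : t < N -> (v t == q) = false.
  by move=> lt_tN; apply: contraNF qNP => /eqP <-; apply: mem_v.
case: noC4; exists (v i), (v i.+1), (v i.+2), q; split.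
  by rewrite !cons_uniq !inE !v_eq ?qv //=; lia.
by rewrite !v_edge 1?e_sym ?e_qj 1?e_sym ?e_iq //; lia.
Qed.

Lemma min_ear_disjoint a m1 r1 c m2 r2 : ear a m1 r1 -> ear c m2 r2 -> a != c ->
  distn a c < j - i -> ~~ has (mem r2) r1.
Proof.
move=> ear1 ear2 neq_ac close; apply/negP => /(ear_join ear1 ear2 neq_ac)[r /ij_min].
by rewrite leqNgt close.
Qed.

Lemma inner_ear_escapes l m r : i < l -> l < j -> ear l m r ->
  (j < m /\ l = j %[mod 3]) \/ (m < i /\ l = i %[mod 3]).
Proof.
move=> lt_il lt_lj ear_l.
have := ij_min ear_l; have := ear_neq ear_l; rewrite /distn => neq_lm span_lm.
have [lt_jm | le_mj] := ltnP j m.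
  left; split=> //; apply/esym; apply: (crossing_ears_mod3 ear_ij ear_l lt_il lt_lj lt_jm).
  by apply: min_ear_disjoint ear_l ear_ij _ _; rewrite /distn; lia.
have [lt_mi | le_im] := ltnP m i; last by lia.
right; split=> //; apply: (crossing_ears_mod3 (ear_rev ear_l) ear_ij lt_mi lt_il lt_lj).
rewrite (eq_has (mem_rev r)).
by apply: min_ear_disjoint ear_ij ear_l _ _; rewrite /distn; lia.
Qed.

Lemma inner_ears_cross l1 l2 m1 m2 r1 r2 : i < l1 -> l1 < l2 -> l2 < j ->
  ear l1 m1 r1 -> j < m1 -> ear l2 m2 r2 -> m2 < i -> l1 = l2 %[mod 3].
Proof.
move=> lt_il1 lt_l12 lt_l2j ear1 lt_jm1 ear2 lt_m2i; apply/esym.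
apply: (crossing_ears_mod3 (ear_rev ear2) ear1); try lia.
rewrite (eq_has (mem_rev r2)).
by apply: min_ear_disjoint ear1 ear2 _ _; rewrite /distn; lia.
Qed.

Lemma inner_deg_escape l : i < l -> l < j -> deg e (v l) != 2 ->
  exists m r, ear l m r /\ ((j < m /\ l = j %[mod 3]) \/ (m < i /\ l = i %[mod 3])).
Proof.
move=> lt_il lt_lj deg_l.
have lt_lN : l.+1 < N := leq_ltn_trans lt_lj (ear_ltN_r ear_ij).
have [m [r ear_l]] := inner_ear (leq_ltn_trans (leq0n i) lt_il) lt_lN deg_l.
by exists m, r; split; last exact: (inner_ear_escapes lt_il lt_lj ear_l).
Qed.

Lemma inner_deg2 l : i < l -> l < j ->
  l != i %[mod 3] -> l != j %[mod 3] -> deg e (v l) = 2.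
Proof.
move=> lt_il lt_lj /eqP l_i /eqP l_j; apply/eqP; apply: contraT => deg_l.
by have [m [r [_ [[_ /l_j] | [_ /l_i]]]]] := inner_deg_escape lt_il lt_lj deg_l.
Qed.

Lemma inner_pair_mod3 l1 l2 : i < l1 -> l1 < l2 -> l2 < j ->
  deg e (v l1) != 2 -> deg e (v l2) != 2 ->
  l1 = j %[mod 3] -> l2 = i %[mod 3] -> i = j %[mod 3].
Proof.
move=> lt_il1 lt_l12 lt_l2j deg1 deg2 l1_j l2_i.
have [m1 [r1 [ear1 [[lt_jm1 _] | [_ l1_i]]]]] :=
  inner_deg_escape lt_il1 (ltn_trans lt_l12 lt_l2j) deg1; last by rewrite -l1_i.
have [m2 [r2 [ear2 [[_ l2_j] | [lt_m2i _]]]]] :=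
  inner_deg_escape (ltn_trans lt_il1 lt_l12) lt_l2j deg2; first by rewrite -l2_i.
by rewrite -l2_i -l1_j (inner_ears_cross lt_il1 lt_l12 lt_l2j ear1 lt_jm1 ear2 lt_m2i).
Qed.

Lemma min_ear_absurd : False.
Proof.
have span := min_ear_span; have lt_jN := ear_ltN_r ear_ij.
have deg2_succ l : i < l -> l.+1 < j -> deg e (v l) = 2 -> deg e (v l.+1) != 2.
  by move=> lt_il lt_l1j; apply: inner_deg2_succ; lia.
(* Inner vertices congruent to neither i nor j have degree 2, so: if j = i,
   v i.+1 and v i.+2 are adjacent of degree 2; if j = i + 1, v i.+1 and v i.+3
   flank the degree-2 vertex v i.+2; if j = i + 2, v i.+2 and v i.+3 are flanked
   by the degree-2 vertices v i.+1 and v i.+4 (all mod 3). *)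
have [s0 | [s1 | s2]] : (j - i) %% 3 = 0 \/ (j - i) %% 3 = 1 \/ (j - i) %% 3 = 2 by lia.
- have deg1 : deg e (v i.+1) = 2 by apply: inner_deg2; lia.
  have deg2 : deg e (v i.+2) = 2 by apply: inner_deg2; lia.
  by move: (deg2_succ i.+1 (ltnSn i) ltac:(lia) deg1); rewrite deg2.
- have deg2 : deg e (v i.+2) = 2 by apply: inner_deg2; lia.
  have deg1 : deg e (v i.+1) != 2.
    by apply: contra_neq (deg2_succ i.+1 (ltnSn i) ltac:(lia)) _; rewrite deg2.
  have deg3 : deg e (v i.+3) != 2 by apply: deg2_succ; lia.
  suff : i = j %[mod 3] by lia.
  by apply: (inner_pair_mod3 (l1 := i.+1) (l2 := i.+3) _ _ _ deg1 deg3); lia.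
- have deg1 : deg e (v i.+1) = 2 by apply: inner_deg2; lia.
  have deg4 : deg e (v i.+4) = 2 by apply: inner_deg2; lia.
  have deg2 : deg e (v i.+2) != 2 by apply: deg2_succ; lia.
  have deg3 : deg e (v i.+3) != 2.
    by apply: contra_neq (deg2_succ i.+3 ltac:(lia) ltac:(lia)) _; rewrite deg4.
  suff : i = j %[mod 3] by lia.
  by apply: (inner_pair_mod3 (l1 := i.+2) (l2 := i.+3) _ _ _ deg2 deg3); lia.
Qed.

End MinimalEar.

Lemma longest_path_absurd : False.
Proof.
have [i [j [rq [ear_ij lt_ij ij_min]]]] := exists_min_ear.
exact: min_ear_absurd ear_ij lt_ij ij_min.
Qed.

End LongestPath.

Section XYPaths.
Variables (T : finType) (e : rel T) (x y : T).

Lemma xy_path_size_lt_card p : xy_path e x y p -> size p < #|T|.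
Proof.
case/and3P=> _ _ /card_uniqP p_card.
by rewrite -[_ < _]/(size (x :: p) <= #|T|) -p_card max_card.
Qed.

Lemma exists_xy_path : x != y -> two_connected (add_edge e x y) ->
  exists p, xy_path e x y p.
Proof.
move=> x_neq_y [card_T conn].
have [z zNxy] : exists z, z \notin [:: x; y].
  case: (pickP [predC [:: x; y]]) => [z zNxy | all_xy]; first by exists z.
  move: card_T; rewrite ltnNge => /negP[]; apply: leq_trans (card_size [:: x; y]).
  by apply/subset_leq_card/subsetP => z _; apply/negbFE/all_xy.
move: zNxy; rewrite !inE negb_or => /andP[z_neq_x z_neq_y].
have [q1 /and3P[q1_path /eqP q1_last q1_avoid]] := conn y x z
  ltac:(by rewrite !inE) ltac:(by rewrite !inE).
have [q2 /and3P[q2_path /eqP q2_last q2_avoid]] := conn x z y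
  ltac:(by rewrite !inE) ltac:(by rewrite !inE eq_sym).
have y_off : y \notin x :: q1.
  by rewrite inE negb_or eq_sym x_neq_y; apply/negP => /(allP q1_avoid); rewrite !inE eqxx.
have x_off : x \notin z :: q2.
  by rewrite inE negb_or eq_sym z_neq_x; apply/negP => /(allP q2_avoid); rewrite !inE eqxx.
have walk : path e x (q1 ++ q2).
  rewrite cat_path q1_last (path_add_edge_avoid _ y_off q1_path) ?inE ?eqxx ?orbT //.
  by rewrite (path_add_edge_avoid _ x_off q2_path) // !inE eqxx.
have walk_last : last x (q1 ++ q2) = y by rewrite last_cat q1_last.
case: (shortenP walk) walk_last => p p_path p_uniq _ p_last.
by exists p; apply/and3P; split=> //; rewrite p_last.
Qed.

Lemma exists_longest_xy_path : x != y -> two_connected (add_edge e x y) ->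
  exists p0, xy_path e x y p0 /\ forall p, xy_path e x y p -> size p <= size p0.
Proof.
move=> x_neq_y G2c.
have [||n [[p0 [p0_xy <-]] p0_max]] :=
  @ex_maxn_prop (fun n => exists p, xy_path e x y p /\ size p = n) #|T|.
- by have [p p_xy] := exists_xy_path x_neq_y G2c; exists (size p), p.
- by move=> n [p [/xy_path_size_lt_card + <-]]; apply: ltnW.
by exists p0; split=> // p p_xy; apply: p0_max; exists p.
Qed.

End XYPaths.

Theorem lemma2p5 (T : finType) (e : rel T) (x y : T) :
  simple_graph e -> 4 <= #|T| -> x != y ->
  two_connected (add_edge e x y) ->
  independent e (N2 e :\: [set x; y]) ->
  ~ has_C4 e ->
  exists p1 p2 : seq T,
    [/\ xy_path e x y p1, xy_path e x y p2 & size p1 %% 3 != size p2 %% 3].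
Proof.
move=> [e_irr e_sym] card_T x_neq_y G2c N2_indep noC4.
have [p0 [p0_xy p0_longest]] := exists_longest_xy_path x_neq_y G2c.
apply: NNPP => no_pair.
have p0_mod3 p : xy_path e x y p -> size p = size p0 %[mod 3].
  move=> p_xy; apply/eqP/negPn/negP => neq.
  by apply: no_pair; exists p, p0.
exact: (longest_path_absurd e_sym p0_xy p0_longest p0_mod3
          e_irr x_neq_y G2c N2_indep card_T noC4).
Qed.
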